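(* For a word $w=w_1\cdots w_n$ over $\{1,2,3,4\}$ let $s(w)=|\{i : 1\le i\le n-2,\ w_{i+2}-w_i=2\}|$. Then $$\sum_{w\in\{1,2,3,4\}^*} q^{|w|}z^{s(w)}=\frac{1}{1-4q-8q^3(z-1)-4q^4(z-1)^2}.$$
   Context: The sum ranges over all finite words over $\{1,2,3,4\}$, including the empty word; $|w|$ denotes length. $s(w)$ counts occurrences of the place-difference-value pattern $(12,(\mathbb{P},\{2\},\mathbb{P}),\{(1,2,\{2\})\},(\mathbb{P},\mathbb{P}))$. *)

From mathcomp Require Import all_boot all_order all_algebra.
Set Implicit Arguments. Unset Strict Implicit. Unset Printing Implicit Defensive.
Import GRing.Theory.
Local Open Scope ring_scope.

(* A word over {1,2,3,4} of length n: an n-tuple of 'I_4, letter a read as a+1. *)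
Definition letters (w : seq 'I_4) : seq nat := map (fun a : 'I_4 => (val a).+1) w.

(* s(w) = #{ i : 1 <= i <= n-2, w_{i+2} - w_i = 2 } (0-based index here). *)
Definition s_stat (w : seq 'I_4) : nat :=
  count (fun i => nth 0%N (letters w) i.+2 == (nth 0%N (letters w) i + 2)%N)
        (iota 0 (size w - 2)).

(* Coefficient of q^n in the generating function: a polynomial in z. *)
Definition Fcoef (n : nat) : {poly int} :=
  \sum_(w : n.-tuple 'I_4) 'X ^+ (s_stat w).

(* Denominator 1 - 4q - 8q^3(z-1) - 4q^4(z-1)^2, as a polynomial in q
   with coefficients in Z[z]. *)
Definition Den : {poly {poly int}} :=
  1 - (4%:R : {poly int})%:P * 'X
    - ((8%:R : {poly int}) * ('X - 1))%:P * 'X ^+ 3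
    - ((4%:R : {poly int}) * ('X - 1) ^+ 2)%:P * 'X ^+ 4.

(* The condition w_{i+2} = w_i + 2 only links letters of the same parity of
   position, so s(w) is the sum of the numbers of "rises by 2" in the
   subwords of odd and of even positions, and F_n = G_{ceil(n/2)} G_{floor(n/2)}
   where G_m counts words of length m by rises by 2 between consecutive
   letters.  A transfer argument over the classes {1,2} and {3,4} gives
   G_{m+2} = 4 G_{m+1} + 2(z-1) G_m, and multiplying out the two parity
   cases turns this into F_{n+4} = 4 F_{n+3} + 8(z-1) F_{n+1} + 4(z-1)^2 F_n,
   which is the recurrence encoded by the denominator. *)
From mathcomp Require Import all_boot all_order all_algebra.
From mathcomp Require Import ring zify.
Local Open Scope ring_scope.
Import GRing.Theory.

(* Letters 1 and 2: the only ones that can be followed by a letter larger by 2. *)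
Definition low (a : 'I_4) : bool := (val a < 2)%N.

(* [chain_gf m lo]: generating polynomial of the m letters following a letter
   of class [lo] in one parity subword, counted by rises by 2. *)
Fixpoint chain_gf (m : nat) (lo : bool) : {poly int} :=
  if m is m'.+1 then
    2%:R * chain_gf m' true + (if lo then 1 + 'X else 2%:R) * chain_gf m' false
  else 1.

Lemma big_ord4 (R : nmodType) (f : 'I_4 -> R) :
  \sum_(c : 'I_4) f c =
  f (@Ordinal 4 0 isT) + f (@Ordinal 4 1 isT) + f (@Ordinal 4 2 isT)
  + f (@Ordinal 4 3 isT).
Proof.
rewrite !big_ord_recr big_ord0 /= add0r.
by congr (_ + _ + _ + _); congr f; apply: val_inj.
Qed.

Lemma sum_next_letter (a : 'I_4) (g : bool -> {poly int}) :
  \sum_(c : 'I_4) 'X ^+ (val c == (val a + 2)%N) * g (low c) =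
  2%:R * g true + (if low a then 1 + 'X else 2%:R) * g false.
Proof.
rewrite big_ord4 /low /=.
by case: a => [[|[|[|[|?]]]] ?] //=; rewrite ?expr0 ?expr1 ?mul1r; ring.
Qed.

Lemma big_tuple_cons (T : finType) (R : nmodType) n (F : seq T -> R) :
  \sum_(t : n.+1.-tuple T) F t = \sum_(a : T) \sum_(t : n.-tuple T) F (a :: t).
Proof.
rewrite pair_big (reindex (fun p : T * n.-tuple T => [tuple of p.1 :: p.2])) //=.
apply: onW_bij; exists (fun t : n.+1.-tuple T => (thead t, [tuple of behead t])).
  by move=> [a t] /=; rewrite theadE; congr pair; apply: val_inj.
by move=> t; rewrite /= -tuple_eta.
Qed.

Lemma s_stat_small (w : seq 'I_4) : (size w <= 2)%N -> s_stat w = 0%N.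
Proof. by rewrite /s_stat -subn_eq0 => /eqP ->. Qed.

Lemma s_stat_cons a b c (w : seq 'I_4) :
  s_stat [:: a, b, c & w] = ((val c == (val a + 2)%N) + s_stat [:: b, c & w])%N.
Proof.
rewrite /s_stat /= (iotaDl 1 0) count_map !subSS subn0.
by rewrite addSn eqSS.
Qed.

Lemma s_stat_high_prefix (a b : 'I_4) (w : seq 'I_4) :
  ~~ low a -> ~~ low b -> s_stat [:: a, b & w] = s_stat w.
Proof.
rewrite /low -!leqNgt => a_high b_high.
have no_rise (c d : 'I_4) : (2 <= val d)%N -> (val c == (val d + 2)%N) = false.
  by move=> d_high; apply/negbTE/eqP; have : (val c < 4)%N := ltn_ord c; lia.
case: w => [|c [|d w]]; first by rewrite !s_stat_small.
  by rewrite s_stat_cons no_rise // !s_stat_small.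
by rewrite !s_stat_cons !no_rise.
Qed.

Lemma sum_s_stat_prefix n (a b : 'I_4) :
  \sum_(t : n.-tuple 'I_4) 'X ^+ (s_stat [:: a, b & t]) =
  chain_gf (uphalf n) (low a) * chain_gf n./2 (low b).
Proof.
elim: n a b => [|n IHn] a b.
  rewrite (eq_bigr (fun _ => 1)) => [|t _]; last by rewrite s_stat_small ?size_tuple.
  by rewrite sumr_const card_tuple mulr1.
rewrite (big_tuple_cons _ _ _ (fun t => 'X ^+ s_stat [:: a, b & t])).
have sum_tail (c : 'I_4) :
    \sum_(t : n.-tuple 'I_4) 'X ^+ s_stat [:: a, b, c & t] =
    chain_gf (uphalf n) (low b) * ('X ^+ (val c == (val a + 2)%N) * chain_gf n./2 (low c)).
  by rewrite mulrCA -IHn mulr_sumr; apply: eq_bigr => t _; rewrite s_stat_cons exprD.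
rewrite (eq_bigr _ (fun c _ => sum_tail c)).
by rewrite -mulr_sumr sum_next_letter mulrC.
Qed.

(* Prepending two letters of {3,4} creates no occurrence, so the previous
   lemma also describes F_n itself. *)
Lemma Fcoef_split n : Fcoef n = chain_gf (uphalf n) false * chain_gf n./2 false.
Proof.
pose h : 'I_4 := @Ordinal 4 3 isT.
rewrite /Fcoef -(sum_s_stat_prefix n h h).
by apply: eq_bigr => t _; rewrite s_stat_high_prefix.
Qed.

Lemma Fcoef_rec n :
  Fcoef n.+4 = 4%:R * Fcoef n.+3 + 8%:R * ('X - 1) * Fcoef n.+1
               + 4%:R * ('X - 1) ^+ 2 * Fcoef n.
Proof.
rewrite !Fcoef_split -[n]odd_double_half.
by case: (odd n); rewrite /= ?add1n ?add0n /= ?uphalf_double ?doubleK;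
  move: (chain_gf n./2 true) (chain_gf n./2 false) => x y; ring.
Qed.

Lemma Den_coef k :
  Den`_k = (k == 0%N)%:R - 4%:R * (k == 1%N)%:R - 8%:R * ('X - 1) * (k == 3%N)%:R
           - 4%:R * ('X - 1) ^+ 2 * (k == 4%N)%:R.
Proof. by rewrite /Den !coefB coef1 !coefCM coefX !coefXn !mulrA. Qed.

Lemma sum_ord_indicator (R : pzSemiRingType) (x : nat -> R) n j :
  \sum_(k < n.+1) (val k == j)%:R * x (val k) = (j <= n)%:R * x j.
Proof.
elim: n => [|n IHn]; first by rewrite big_ord1; case: j => [|j]; rewrite /= ?mul0r.
rewrite big_ord_recr /= IHn.
case: (ltngtP j n.+1) => [j_lt|j_gt|->].
- by rewrite ltnS in j_lt; rewrite j_lt mul0r addr0.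
- by rewrite leqNgt (ltnW j_gt) /= !mul0r addr0.
- by rewrite ltnn mul0r add0r.
Qed.

Lemma sum_Den_conv (f : nat -> {poly int}) n :
  \sum_(k < n.+1) Den`_k * f (n - k)%N =
  f n - (1 <= n)%:R * (4%:R * f (n - 1)%N)
      - (3 <= n)%:R * (8%:R * ('X - 1) * f (n - 3)%N)
      - (4 <= n)%:R * (4%:R * ('X - 1) ^+ 2 * f (n - 4)%N).
Proof.
rewrite (eq_bigr (fun k : 'I_n.+1 =>
   (val k == 0%N)%:R * f (n - k)%N - (val k == 1%N)%:R * (4%:R * f (n - k)%N)
   - (val k == 3%N)%:R * (8%:R * ('X - 1) * f (n - k)%N)
   - (val k == 4%N)%:R * (4%:R * ('X - 1) ^+ 2 * f (n - k)%N))) => [|k _].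
  by rewrite !sumrB !(sum_ord_indicator _ (fun k => _ * f (n - k)%N))
             (sum_ord_indicator _ (fun k => f (n - k)%N)) subn0 mul1r.
rewrite Den_coef.
by move: (val k == 0%N)%:R (val k == 1%N)%:R (val k == 3%N)%:R (val k == 4%N)%:R => *; ring.
Qed.

Theorem mainTheorem7 (n : nat) :
  \sum_(k < n.+1) Den`_k * Fcoef (n - k) = (n == 0%N)%:R.
Proof.
rewrite sum_Den_conv.
case: n => [|[|[|[|n]]]]; last by rewrite Fcoef_rec /= !subSS !subn0 !mul1r; ring.
all: by rewrite !Fcoef_split /=; ring.
Qed.
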